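(* Let $X$ be a finite discrete space with at least two elements, $\Gamma$ a nonempty countable set, $d$ a compatible metric on $X^\Gamma$ (product topology), $\mathcal F$ the unique compatible uniformity on $X^\Gamma$, and $f:X^\Gamma\to X^\Gamma$ a map. For $x,y\in X^\Gamma$: (I) the following are equivalent: (1) there is $s>0$ with $F_{xy}(s)=0$; (2) there is $\alpha\in\mathcal F$ with $G_{xy}(\alpha)=0$; (3) there is a finite $D\subseteq\Gamma$ with $G_{xy}(\gamma_D)=0$. (II) The following are equivalent: (4) there is $s>0$ with $F_{xy}(s)<1$; (5) there is $\alpha\in\mathcal F$ with $G_{xy}(\alpha)<1$; (6) there is a finite $D\subseteq\Gamma$ with $G_{xy}(\gamma_D)<1$. (III) The following are equivalent: (7) $F^*_{xy}(s)=1$ for all $s>0$; (8) $G^*_{xy}(\alpha)=1$ for all $\alpha\in\mathcal F$; (9) $G^*_{xy}(\gamma_D)=1$ for every finite $D\subseteq\Gamma$.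
   Context: For $D\subseteq\Gamma$, $\gamma_D=\{((x_\alpha),(y_\alpha))\in X^\Gamma\times X^\Gamma:x_\alpha=y_\alpha\ \forall\alpha\in D\}$. The uniformity $\mathcal F$ consists of all $B\subseteq X^\Gamma\times X^\Gamma$ containing $\gamma_D$ for some finite $D\subseteq\Gamma$; equivalently, all $B$ containing $\{(x,y):d(x,y)<\varepsilon\}$ for some $\varepsilon>0$. For $\alpha\in\mathcal F$, $n\ge1$: $\zeta(x,y,\alpha,n)=\#\{i\in\{0,\dots,n-1\}:(f^i(x),f^i(y))\in\alpha\}$, $G_{xy}(\alpha)=\liminf_n\zeta(x,y,\alpha,n)/n$, $G^*_{xy}(\alpha)=\limsup_n\zeta(x,y,\alpha,n)/n$. Also $\xi(x,y,t,n)=\#\{i\in\{0,\dots,n-1\}:d(f^i(x),f^i(y))<t\}$, $F_{xy}(t)=\liminf_n\xi(x,y,t,n)/n$, $F^*_{xy}(t)=\limsup_n\xi(x,y,t,n)/n$. *)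

From mathcomp Require Import all_boot all_order all_algebra.
From mathcomp Require Import all_classical all_reals all_analysis.
Set Implicit Arguments. Unset Strict Implicit. Unset Printing Implicit Defensive.
Import Order.TTheory GRing.Theory Num.Theory.
Local Open Scope classical_set_scope.
Local Open Scope ring_scope.

Section Defs.
Variables (Gam : Type) (X : finType).
Notation T := (Gam -> X).

Definition gammaD (D : set Gam) : set (T * T) :=
  [set p | forall a, D a -> p.1 a = p.2 a].

Definition unifF : set (set (T * T)) :=
  [set B | exists D : set Gam, finite_set D /\ gammaD D `<=` B].

Definition cyl (x : T) (D : set Gam) : set T := [set y | forall a, D a -> y a = x a].

Variable R : realType.

Definition is_metric (d : T -> T -> R) : Prop :=
  [/\ (forall x y, 0 <= d x y),
      (forall x y, d x y = 0 <-> x = y),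
      (forall x y, d x y = d y x) &
      (forall x y z, d x z <= d x y + d y z)].

(* d induces the product topology (X discrete): at every point, metric balls
   and cylinders over finite sets of coordinates form equivalent
   neighbourhood bases *)
Definition compatible_metric (d : T -> T -> R) : Prop :=
  is_metric d /\
  forall x : T,
    (forall e : R, 0 < e -> exists D, finite_set D /\
         cyl x D `<=` [set y | d x y < e]) /\
    (forall D, finite_set D -> exists e : R, 0 < e /\
         [set y | d x y < e] `<=` cyl x D).

Variable f : T -> T.

Definition zeta (x y : T) (al : set (T * T)) (n : nat) : nat :=
  #|[set i : 'I_n | `[< al (iter i f x, iter i f y) >] ]|.

Definition xi (d : T -> T -> R) (x y : T) (t : R) (n : nat) : nat :=
  #|[set i : 'I_n | d (iter i f x) (iter i f y) < t]|.

(* sequences of ratios, indexed so that term k corresponds to n = k+1 *)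
Definition Gseq x y al : R^nat := fun k => (zeta x y al k.+1)%:R / (k.+1)%:R.
Definition Fseq d x y t : R^nat := fun k => (xi d x y t k.+1)%:R / (k.+1)%:R.

Definition G x y al : R := limn_inf (Gseq x y al).
Definition Gstar x y al : R := limn_sup (Gseq x y al).
Definition Fl d x y t : R := limn_inf (Fseq d x y t).
Definition Fstar d x y t : R := limn_sup (Fseq d x y t).
End Defs.

From mathcomp Require Import all_boot all_order all_algebra.
From mathcomp Require Import all_classical all_reals all_analysis.
From mathcomp Require Import finmap.
Set Implicit Arguments. Unset Strict Implicit. Unset Printing Implicit Defensive.
Import Order.TTheory GRing.Theory Num.Theory.
Local Open Scope classical_set_scope.
Local Open Scope ring_scope.

(* The metric entourages [d < s] form a base of the uniformity F: this is
   where compactness of X^Gam enters. If it failed, a sequence of bad pairs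
   would have, by a diagonal extraction along an enumeration of Gam, a
   cluster point z in the product topology, and compatibility of d at z alone
   gives a contradiction. The frequencies G and G* are monotone in the
   entourage, and F, F* are the frequencies of metric entourages; so each of
   the nine conditions is monotone in the entourage and can be tested on
   either base. *)

Section limn_inf_sup_monotone.
Variable R : realType.
Implicit Types u v : R^o^nat.

Lemma has_ubound_range_le u v :
  has_ubound (range v) -> (forall k, u k <= v k) -> has_ubound (range u).
Proof.
by move=> [b vb] uv; exists b => _ [k _ <-]; rewrite (le_trans (uv k)) // vb.
Qed.

Lemma has_lbound_range_ge u v :
  has_lbound (range u) -> (forall k, u k <= v k) -> has_lbound (range v).
Proof.
by move=> [a ua] uv; exists a => _ [k _ <-]; rewrite (le_trans _ (uv k)) // ua.
Qed.

Lemma le_infs u v n : has_lbound (range u) -> (forall k, u k <= v k) ->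
  infs u n <= infs v n.
Proof.
move=> u_lb uv; apply: lb_le_inf; first by exists (v n), n => /=.
move=> _ [m /= nm <-]; apply: le_trans (uv m).
by apply: ge_inf; [exact: has_lbound_sdrop | exists m].
Qed.

Lemma le_sups u v n : has_ubound (range v) -> (forall k, u k <= v k) ->
  sups u n <= sups v n.
Proof.
move=> v_ub uv; apply: ge_sup; first by exists (u n), n => /=.
move=> _ [m /= nm <-]; apply: le_trans (uv m) _.
by apply: ub_le_sup; [exact: has_ubound_sdrop | exists m].
Qed.

Lemma le_limn_inf u v : has_lbound (range u) -> has_ubound (range v) ->
  (forall k, u k <= v k) -> limn_inf u <= limn_inf v.
Proof.
move=> u_lb v_ub uv.
have u_ub := has_ubound_range_le v_ub uv.
have v_lb := has_lbound_range_ge u_lb uv.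
apply: ler_lim; [exact: (@cvgP R^o _ _ (cvg_infs_sup u_ub u_lb))|
                 exact: (@cvgP R^o _ _ (cvg_infs_sup v_ub v_lb))|].
by apply: nearW => n; exact: le_infs.
Qed.

Lemma le_limn_sup u v : has_lbound (range u) -> has_ubound (range v) ->
  (forall k, u k <= v k) -> limn_sup u <= limn_sup v.
Proof.
move=> u_lb v_ub uv.
have u_ub := has_ubound_range_le v_ub uv.
have v_lb := has_lbound_range_ge u_lb uv.
apply: ler_lim; [exact: (@cvgP R^o _ _ (cvg_sups_inf u_ub u_lb))|
                 exact: (@cvgP R^o _ _ (cvg_sups_inf v_ub v_lb))|].
by apply: nearW => n; exact: le_sups.
Qed.

Lemma limn_inf_ge c u : has_ubound (range u) -> (forall k, c <= u k) ->
  c <= limn_inf u.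
Proof.
move=> u_ub cu; rewrite -[c in c <= _](cvg_limn_inf_sup (cvg_cst (c : R^o))).1.
by apply: le_limn_inf => //; exists c => _ [k _ <-].
Qed.

Lemma limn_sup_le c u : has_lbound (range u) -> (forall k, u k <= c) ->
  limn_sup u <= c.
Proof.
move=> u_lb uc; rewrite -[c in _ <= c](cvg_limn_inf_sup (cvg_cst (c : R^o))).2.
by apply: le_limn_sup => //; exists c => _ [k _ <-].
Qed.

End limn_inf_sup_monotone.

Definition metric_ent {T} {R : numDomainType} (d : T -> T -> R) (t : R) :
  set (T * T) := [set p | d p.1 p.2 < t].

Section entourage_frequency.
Variables (R : realType) (Gam : Type) (X : finType).
Variables (f : (Gam -> X) -> Gam -> X) (x y : Gam -> X).
Implicit Types al be : set ((Gam -> X) * (Gam -> X)).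

Lemma Gseq_ge0 al k : 0 <= Gseq R f x y al k.
Proof. by rewrite divr_ge0. Qed.

Lemma Gseq_le1 al k : Gseq R f x y al k <= 1.
Proof.
rewrite ler_pdivrMr ?ltr0Sn // mul1r ler_nat.
by apply: leq_trans (max_card _) _; rewrite card_ord.
Qed.

Lemma has_lbound_Gseq al : has_lbound (range (Gseq R f x y al)).
Proof. by exists 0 => _ [k _ <-]; exact: Gseq_ge0. Qed.

Lemma has_ubound_Gseq al : has_ubound (range (Gseq R f x y al)).
Proof. by exists 1 => _ [k _ <-]; exact: Gseq_le1. Qed.

Lemma le_Gseq al be : al `<=` be ->
  forall k, Gseq R f x y al k <= Gseq R f x y be k.
Proof.
move=> albe k; rewrite ler_wpM2r ?invr_ge0 // ler_nat.
apply/subset_leq_card/fintype.subsetP => i.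
by rewrite !in_setE => /asboolP/albe/asboolP.
Qed.

Lemma G_ge0 al : 0 <= G R f x y al.
Proof. by apply: limn_inf_ge; [exact: has_ubound_Gseq | exact: Gseq_ge0]. Qed.

Lemma Gstar_le1 al : Gstar R f x y al <= 1.
Proof. by apply: limn_sup_le; [exact: has_lbound_Gseq | exact: Gseq_le1]. Qed.

Lemma le_G al be : al `<=` be -> G R f x y al <= G R f x y be.
Proof.
by move=> albe; apply: le_limn_inf;
  [exact: has_lbound_Gseq | exact: has_ubound_Gseq | exact: le_Gseq].
Qed.

Lemma le_Gstar al be : al `<=` be -> Gstar R f x y al <= Gstar R f x y be.
Proof.
by move=> albe; apply: le_limn_sup;
  [exact: has_lbound_Gseq | exact: has_ubound_Gseq | exact: le_Gseq].
Qed.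

Lemma Fseq_metric_ent d t : Fseq f d x y t = Gseq R f x y (metric_ent d t).
Proof.
apply/funext => k; rewrite /Fseq /Gseq /xi /zeta.
by congr (#|_|%:R / _); apply/funext => i /=; rewrite asboolb.
Qed.

Lemma Fl_metric_ent d t : Fl f d x y t = G R f x y (metric_ent d t).
Proof. by rewrite /Fl Fseq_metric_ent. Qed.

Lemma Fstar_metric_ent d t : Fstar f d x y t = Gstar R f x y (metric_ent d t).
Proof. by rewrite /Fstar Fseq_metric_ent. Qed.

End entourage_frequency.

Definition infinitely_often (P : nat -> Prop) :=
  forall N, exists2 n, (N <= n)%N & P n.

Lemma infinitely_often_pigeonhole (X : finType) P (h : nat -> X) :
  infinitely_often P -> exists v, infinitely_often (fun n => P n /\ h n = v).
Proof.
move=> P_io; apply: contrapT => /forallNP no_v.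
have /choice [N N_large] :
    forall v, exists N, forall n, (N <= n)%N -> ~ (P n /\ h n = v).
  move=> v; have /existsNP [N no_n] := no_v v.
  by exists N => n Nn Pn; apply: no_n; exists n.
have [n Nn Pn] := P_io (\max_v N v).
by apply: (N_large (h n) n) => //; apply: leq_trans Nn; exact: leq_bigmax.
Qed.

Lemma finite_set_lt (T : Type) (h : T -> nat) n : injective h ->
  finite_set [set t | (h t < n)%N].
Proof.
move=> h_inj; apply: (finite_preimage (B := `I_n)); last exact: finite_II.
by move=> t t' _ _ /h_inj.
Qed.

Lemma finite_set_bounded (T : Type) (h : T -> nat) (D : set T) :
  finite_set D -> exists K, D `<=` [set t | (h t < K)%N].
Proof.
move=> /(finite_image h) /finite_fsetP [F hDF].
exists (\max_(k <- F) k).+1 => t Dt /=; rewrite ltnS.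
have htF : [set` F] (h t) by rewrite -hDF; exists t.
exact: leq_bigmax_seq htF _.
Qed.

Section diagonal_extraction.
Variables (Gam : Type) (X : finType) (hg : Gam -> nat) (a : nat -> Gam -> X).
Hypothesis hg_inj : injective hg.

(* The fallback value [a 0 g] is only taken when [S] is finite. *)
Definition frequent_value (S : nat -> Prop) (g : Gam) : X :=
  if pselect (exists v, infinitely_often (fun n => S n /\ a n g = v))
    is left v_io then projT1 (cid v_io) else a 0%N g.

Lemma frequent_valueP S g : infinitely_often S ->
  infinitely_often (fun n => S n /\ a n g = frequent_value S g).
Proof.
move=> S_io; rewrite /frequent_value; case: pselect => [v_io|no_v].
  by case: cid.
by have := infinitely_often_pigeonhole (fun n => a n g) S_io.
Qed.

(* Indices along which the coordinates [g] with [hg g < k] are frozen. *)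
Fixpoint extraction (k : nat) : nat -> Prop :=
  if k is k'.+1 then fun n => extraction k' n /\
    forall g, hg g = k' -> a n g = frequent_value (extraction k') g
  else fun _ => True.

Lemma extraction_io k : infinitely_often (extraction k).
Proof.
elim: k => [|k IHk] N /=; first by exists N.
have [[g0 g0k]|no_g] := pselect (exists g, hg g = k).
  have [n Nn [Sn an]] := frequent_valueP g0 IHk N.
  exists n => //; split => // g gk.
  by have -> : g = g0 by apply: hg_inj; rewrite gk g0k.
have [n Nn Sn] := IHk N; exists n => //; split => // g gk.
by case: no_g; exists g.
Qed.

Lemma extraction_antimono k k' n :
  (k <= k')%N -> extraction k' n -> extraction k n.
Proof.
move=> /subnKC <-; elim: (k' - k)%N => [|m IHm]; first by rewrite addn0.
by rewrite addnS => -[/IHm].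
Qed.

Definition cluster_point (g : Gam) : X := frequent_value (extraction (hg g)) g.

Lemma extraction_cyl K n :
  extraction K n -> cyl cluster_point [set g | (hg g < K)%N] (a n).
Proof.
by move=> SKn g gK; have [_ /(_ g erefl)] := extraction_antimono gK SKn.
Qed.

Lemma cluster_pointP D : finite_set D ->
  infinitely_often (fun n => cyl cluster_point D (a n)).
Proof.
move=> /(finite_set_bounded hg) [K DK] N; have [n Nn SKn] := extraction_io K N.
by exists n => // g Dg; exact: extraction_cyl SKn g (DK g Dg).
Qed.

End diagonal_extraction.

Section metric_uniformity.
Variables (R : realType) (Gam : Type) (X : finType).
Local Notation T := (Gam -> X).

Definition unifF_base (E : R -> set (T * T)) :=
  (forall e, 0 < e -> exists D, finite_set D /\ gammaD D `<=` E e) /\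
  (forall D, finite_set D -> exists2 e, 0 < e & E e `<=` gammaD D).

Lemma gammaD_unifF (D : set Gam) : finite_set D -> unifF (gammaD (X:=X) D).
Proof. by move=> fD; exists D; split. Qed.

Lemma unifF_base_exists E (P : set (T * T) -> Prop) : unifF_base E ->
  (forall al be, al `<=` be -> P be -> P al) ->
  ((exists s, 0 < s /\ P (E s)) <-> (exists al, unifF al /\ P al)) /\
  ((exists al, unifF al /\ P al) <-> (exists D, finite_set D /\ P (gammaD D))).
Proof.
move=> [gammaD_E E_gammaD] P_down; split; split.
- move=> [s [s_gt0 Ps]]; have [D [fD DE]] := gammaD_E s s_gt0.
  by exists (gammaD D); split; [exact: gammaD_unifF | exact: P_down DE Ps].
- move=> [al [[D [fD Dal]] Pal]]; have [e e_gt0 ED] := E_gammaD D fD.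
  by exists e; split => //; exact: P_down (subset_trans ED Dal) Pal.
- move=> [al [[D [fD Dal]] Pal]].
  by exists D; split => //; exact: P_down Dal Pal.
- by move=> [D [fD PD]]; exists (gammaD D); split; first exact: gammaD_unifF.
Qed.

Lemma unifF_base_forall E (P : set (T * T) -> Prop) : unifF_base E ->
  (forall al be, al `<=` be -> P al -> P be) ->
  ((forall s, 0 < s -> P (E s)) <-> (forall al, unifF al -> P al)) /\
  ((forall al, unifF al -> P al) <-> (forall D, finite_set D -> P (gammaD D))).
Proof.
move=> [gammaD_E E_gammaD] P_up; split; split.
- move=> PE al [D [fD Dal]]; have [e e_gt0 ED] := E_gammaD D fD.
  exact: P_up (subset_trans ED Dal) (PE e e_gt0).
- move=> Pal s s_gt0; have [D [fD DE]] := gammaD_E s s_gt0.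
  exact: P_up DE (Pal _ (gammaD_unifF fD)).
- by move=> Pal D fD; apply/Pal/gammaD_unifF.
- by move=> PD al [D [fD Dal]]; exact: P_up Dal (PD D fD).
Qed.

Variables (hg : Gam -> nat) (d : T -> T -> R).
Hypotheses (hg_inj : injective hg) (hd : compatible_metric d).

Lemma gammaD_sub_metric_ent e : 0 < e ->
  exists D, finite_set D /\ gammaD D `<=` metric_ent d e.
Proof.
move=> e_gt0; apply: contrapT => /forallNP no_D.
have /choice [p p_far] : forall n, exists p : T * T,
    gammaD [set g | (hg g < n)%N] p /\ e <= d p.1 p.2.
  move=> n; apply: contrapT => /forallNP no_p.
  apply: (no_D [set g | (hg g < n)%N]); split; first exact: finite_set_lt.
  move=> q gq; rewrite /metric_ent /= ltNge.
  by apply/negP => ed; apply: (no_p q).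
have [[_ _ d_sym d_tri] d_loc] := hd.
pose z := cluster_point hg (fun n => (p n).1).
have e2_gt0 : 0 < e / 2 by rewrite divr_gt0.
have [D [fD D_ball]] := (d_loc z).1 _ e2_gt0.
have [K DK] := finite_set_bounded hg fD.
have [n Kn zn] := cluster_pointP (fun n => (p n).1) hg_inj fD K.
have [p_agree p_far_n] := p_far n.
have z_p1 : d z (p n).1 < e / 2 := D_ball _ zn.
have z_p2 : d z (p n).2 < e / 2.
  apply: D_ball => g Dg; rewrite -p_agree ?zn //=.
  exact: leq_trans (DK g Dg) Kn.
have : d (p n).1 (p n).2 < e.
  by rewrite (splitr e); apply: le_lt_trans (d_tri _ z _) _; rewrite d_sym ltrD.
by rewrite ltNge p_far_n.
Qed.

Lemma metric_ent_sub_gammaD D : finite_set D ->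
  exists2 e, 0 < e & metric_ent d e `<=` gammaD D.
Proof.
move=> fD; apply: contrapT => no_e.
have /choice [p p_close] : forall n, exists p : T * T,
    d p.1 p.2 < n.+1%:R^-1 /\ ~ gammaD D p.
  move=> n; apply: contrapT => /forallNP no_p; apply: no_e.
  exists n.+1%:R^-1 => // q dq; apply: contrapT => Dq; exact: (no_p q).
have [[_ _ d_sym d_tri] d_loc] := hd.
pose z := cluster_point hg (fun n => (p n).1).
have [r [r_gt0 ball_D]] := (d_loc z).2 D fD.
have r2_gt0 : 0 < r / 2 by rewrite divr_gt0.
have r2_lt : r / 2 < r by rewrite ltr_pdivrMr // ltr_pMr // ltr1n.
have [D' [fD' D'_ball]] := (d_loc z).1 _ r2_gt0.
have [N _ N_large] := near_infty_natSinv_lt (PosNum r2_gt0).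
have [n Nn zn] := cluster_pointP (fun n => (p n).1) hg_inj fD' N.
have [p_close_n p_apart] := p_close n.
have z_p1 : d z (p n).1 < r / 2 := D'_ball _ zn.
have z_p2 : d z (p n).2 < r.
  rewrite (splitr r); apply: le_lt_trans (d_tri _ (p n).1 _) _.
  by rewrite ltrD // (lt_trans p_close_n) //; exact: N_large.
apply: p_apart => g Dg /=.
by rewrite (ball_D _ (lt_trans z_p1 r2_lt) g Dg) (ball_D _ z_p2 g Dg).
Qed.

Lemma metric_ent_unifF_base : unifF_base (metric_ent d).
Proof.
by split; [exact: gammaD_sub_metric_ent | exact: metric_ent_sub_gammaD].
Qed.

End metric_uniformity.

Theorem lemma3p1 (R : realType) (X : finType) (Gam : Type)
  (hX : (1 < #|X|)%N) (hGne : exists g : Gam, True) (hGc : countable [set: Gam])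
  (d : (Gam -> X) -> (Gam -> X) -> R) (hd : compatible_metric d)
  (f : (Gam -> X) -> (Gam -> X)) (x y : Gam -> X) :
  [/\ ((exists s : R, 0 < s /\ Fl f d x y s = 0) <->
         (exists al, unifF al /\ G R f x y al = 0)) /\
      ((exists al, unifF al /\ G R f x y al = 0) <->
         (exists D, finite_set D /\ G R f x y (gammaD (X:=X) D) = 0)),
      ((exists s : R, 0 < s /\ Fl f d x y s < 1) <->
         (exists al, unifF al /\ G R f x y al < 1)) /\
      ((exists al, unifF al /\ G R f x y al < 1) <->
         (exists D, finite_set D /\ G R f x y (gammaD (X:=X) D) < 1)) &
      ((forall s : R, 0 < s -> Fstar f d x y s = 1) <->
         (forall al, unifF al -> Gstar R f x y al = 1)) /\
      ((forall al, unifF al -> Gstar R f x y al = 1) <->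
         (forall D, finite_set D -> Gstar R f x y (gammaD (X:=X) D) = 1))].
Proof.
have [hg hg_inj] := countable_injP _ hGc.
have base : unifF_base (metric_ent d).
  by apply: metric_ent_unifF_base hd => a b; apply: hg_inj; exact: in_setT.
have -> : Fl f d x y = G R f x y \o metric_ent d.
  by apply/funext => s; exact: Fl_metric_ent.
have -> : Fstar f d x y = Gstar R f x y \o metric_ent d.
  by apply/funext => s; exact: Fstar_metric_ent.
split.
- apply: (unifF_base_exists (P := fun al => G R f x y al = 0)) base _.
  move=> al be albe Gbe; apply/eqP; rewrite eq_le G_ge0 andbT -Gbe.
  exact: le_G.
- apply: (unifF_base_exists (P := fun al => G R f x y al < 1)) base _.
  by move=> al be albe; exact: le_lt_trans (le_G R f x y albe).
- apply: (unifF_base_forall (P := fun al => Gstar R f x y al = 1)) base _.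
  move=> al be albe Gal; apply/eqP; rewrite eq_le Gstar_le1 -Gal.
  exact: le_Gstar.
Qed.
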